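(* Consider the uncertain control affine system \[ \dot x = f(x) + g(x)u + \varphi(x,u)\theta,\qquad \varphi(x,u)=[F(x)\;\; G(x)\,\mathrm{diag}(u)]\in\mathbb{R}^{n\times(p+m)}, \] with state $x\in\mathbb{R}^n$, input $u\in\mathcal{U}\subseteq\mathbb{R}^m$, known locally Lipschitz $f:\mathbb{R}^n\to\mathbb{R}^n$, $g:\mathbb{R}^n\to\mathbb{R}^{n\times m}$, known matrix-valued functions $F:\mathbb{R}^n\to\mathbb{R}^{n\times p}$, $G:\mathbb{R}^n\to\mathbb{R}^{n\times m}$, and unknown $\theta\in\mathbb{R}^{p+m}$. Assume $\theta\in\Theta:=[\underline{\theta}_1,\overline{\theta}_1]\times\cdots\times[\underline{\theta}_{p+m},\overline{\theta}_{p+m}]$ for known constants, and write $\Theta=\{\theta\in\mathbb{R}^{p+m}: A\theta\le b\}$ with $A\in\mathbb{R}^{2(p+m)\times(p+m)}$, $b\in\mathbb{R}^{2(p+m)}$ its halfspace representation. Let $h:\mathbb{R}^n\to\mathbb{R}$ be continuously differentiable, $\mathcal{C}=\{x: h(x)\ge0\}$, and suppose there is an extended class $\mathcal{K}$ function $\alpha$ with \[ \sup_{u\in\mathcal{U}}\inf_{\theta\in\Theta}\big(L_fh(x)+L_gh(x)u+L_\varphi h(x,u)\theta\big)\ge -\alpha(h(x))\quad\forall x\in\mathcal{C}, \] and that for each $x\in\mathcal{C}$ the set $K_{rcbf}(x)=\{u\in\mathcal{U}\mid L_fh(x)+L_gh(x)u+\inf_{\theta\in\Theta}L_\varphi h(x,u)\theta\ge-\alpha(h(x))\}$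 is nonempty. Let $k_d:\mathbb{R}^n\to\mathbb{R}^m$ be a locally Lipschitz nominal policy and, for each $x$, consider the quadratic program in the decision variables $u\in\mathcal{U}$ and $\mu\in\mathbb{R}^{2(p+m)}$: \[ \min_{u\in\mathcal{U},\,\mu\le 0}\ \tfrac12\|u-k_d(x)\|^2\quad\text{s.t.}\quad L_fh(x)+L_gh(x)u+b^\top\mu\ge-\alpha(h(x)),\qquad \mu^\top A=L_\varphi h(x,u). \] Then any locally Lipschitz policy $u=k(x)$ given by (the $u$-component of) a solution of this program renders $\mathcal{C}$ forward invariant for the closed-loop system $\dot x=f(x)+g(x)k(x)+\varphi(x,k(x))\theta$.
   Context: $L_fh(x)=\nabla h(x)f(x)$, $L_gh(x)=\nabla h(x)g(x)$, $L_\varphi h(x,u)=\nabla h(x)\varphi(x,u)\in\mathbb{R}^{1\times(p+m)}$ (affine in $u$). $\mu\le0$ is componentwise. An extended class $\mathcal{K}$ function is a continuous strictly increasing $\alpha:\mathbb{R}\to\mathbb{R}$ with $\alpha(0)=0$. $\mathrm{diag}(u)$ is the diagonal matrix with the entries of $u$ on its diagonal. A closed set $\mathcal{C}$ is forward invariant if every closed-loop solution starting in $\mathcal{C}$ stays in $\mathcal{C}$ on its maximal interval of existence. *)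

From HB Require Import structures.
From mathcomp Require Import all_boot all_order all_algebra.
From mathcomp Require Import all_classical all_reals all_analysis.
Set Implicit Arguments. Unset Strict Implicit. Unset Printing Implicit Defensive.
Import Order.TTheory GRing.Theory Num.Theory.
Import numFieldNormedType.Exports.
Local Open Scope classical_set_scope.
Local Open Scope ring_scope.

Section Defs.
Context {R : realType}.

Definition ext_classK (alpha : R -> R) : Prop :=
  continuous alpha /\ {homo alpha : a b / a < b} /\ alpha 0 = 0.

Definition loc_lipschitz (V W : normedModType R) (f : V -> W) : Prop :=
  [locally [lipschitz f x | x in setT]].

Definition grad (n : nat) (h : 'cV[R]_n -> R) (x : 'cV[R]_n) : 'rV[R]_n :=
  \row_i ('D_(delta_mx i 0) h x).

Definition C1 (n : nat) (h : 'cV[R]_n -> R) : Prop :=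
  (forall x, differentiable h x) /\ continuous (grad h).

Definition phi (n p m : nat) (F : 'cV[R]_n -> 'M[R]_(n, p))
  (G : 'cV[R]_n -> 'M[R]_(n, m)) (x : 'cV[R]_n) (u : 'cV[R]_m)
  : 'M[R]_(n, p + m) := row_mx (F x) (G x *m diag_mx u^T).

Definition Lf (n : nat) (h : 'cV[R]_n -> R) (f : 'cV[R]_n -> 'cV[R]_n)
  (x : 'cV[R]_n) : R := (grad h x *m f x) 0 0.
Definition Lg (n m : nat) (h : 'cV[R]_n -> R) (g : 'cV[R]_n -> 'M[R]_(n, m))
  (x : 'cV[R]_n) : 'rV[R]_m := grad h x *m g x.
Definition Lphi (n p m : nat) (h : 'cV[R]_n -> R) (F : 'cV[R]_n -> 'M[R]_(n, p))
  (G : 'cV[R]_n -> 'M[R]_(n, m)) (x : 'cV[R]_n) (u : 'cV[R]_m) : 'rV[R]_(p + m) :=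
  grad h x *m phi F G x u.

Definition sc (M : 'M[R]_1) : R := M 0 0.

Definition sqnorm (m : nat) (v : 'cV[R]_m) : R := \sum_i (v i 0) ^+ 2.

Definition box (q : nat) (lo hi : 'cV[R]_q) : set 'cV[R]_q :=
  [set th | forall i, lo i 0 <= th i 0 <= hi i 0].

Definition cv_le (q : nat) (a b : 'cV[R]_q) : Prop := forall i, a i 0 <= b i 0.

Definition qp_feasible (n p m : nat) (U : set 'cV[R]_m)
  (A : 'M[R]_((p + m).*2, p + m)) (b : 'cV[R]_((p + m).*2))
  (h : 'cV[R]_n -> R) (alpha : R -> R) (f : 'cV[R]_n -> 'cV[R]_n)
  (g : 'cV[R]_n -> 'M[R]_(n, m)) (F : 'cV[R]_n -> 'M[R]_(n, p))
  (G : 'cV[R]_n -> 'M[R]_(n, m)) (x : 'cV[R]_n)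
  (u : 'cV[R]_m) (mu : 'cV[R]_((p + m).*2)) : Prop :=
  U u /\ cv_le mu 0 /\
  Lf h f x + sc (Lg h g x *m u) + sc (b^T *m mu) >= - alpha (h x) /\
  mu^T *m A = Lphi h F G x u.

Definition qp_solution (n p m : nat) (U : set 'cV[R]_m)
  (A : 'M[R]_((p + m).*2, p + m)) (b : 'cV[R]_((p + m).*2))
  (h : 'cV[R]_n -> R) (alpha : R -> R) (f : 'cV[R]_n -> 'cV[R]_n)
  (g : 'cV[R]_n -> 'M[R]_(n, m)) (F : 'cV[R]_n -> 'M[R]_(n, p))
  (G : 'cV[R]_n -> 'M[R]_(n, m)) (kd : 'cV[R]_n -> 'cV[R]_m) (x : 'cV[R]_n)
  (u : 'cV[R]_m) (mu : 'cV[R]_((p + m).*2)) : Prop :=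
  qp_feasible U A b h alpha f g F G x u mu /\
  forall u' mu', qp_feasible U A b h alpha f g F G x u' mu' ->
    2^-1 * sqnorm (u - kd x) <= 2^-1 * sqnorm (u' - kd x).

Definition is_solution (n : nat) (rhs : 'cV[R]_n -> 'cV[R]_n) (T : R)
  (xs : R -> 'cV[R]_n) : Prop :=
  {within [set t | 0 <= t < T], continuous xs} /\
  forall t, 0 < t < T -> is_derive t (1 : R) xs (rhs (xs t)).

Definition forward_invariant (n : nat) (rhs : 'cV[R]_n -> 'cV[R]_n)
  (C : set 'cV[R]_n) : Prop :=
  forall (T : R) (xs : R -> 'cV[R]_n), is_solution rhs T xs -> C (xs 0) ->
    forall t, 0 <= t < T -> C (xs t).

End Defs.

(** A feasible point (u, mu) of the QP is a dual certificate: since mu <= 0 and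
    A theta <= b for the true parameter, weak duality gives
    b^T mu <= mu^T A theta = L_phi h(x, u) theta, so the QP constraint implies
    the barrier condition dh/dt >= -alpha(h) along the closed loop, whatever
    theta in the box is.  As alpha(h) < 0 when h < 0, h increases wherever it
    is negative, so it cannot become negative starting from h >= 0. *)
From HB Require Import structures.
From mathcomp Require Import all_boot all_order all_algebra.
From mathcomp Require Import all_classical all_reals all_analysis.
From mathcomp Require Import lra.
Set Implicit Arguments. Unset Strict Implicit. Unset Printing Implicit Defensive.
Import Order.TTheory GRing.Theory Num.Theory Num.Def.
Import numFieldNormedType.Exports.
Local Open Scope classical_set_scope.
Local Open Scope ring_scope.

Section Comparison.
Context {R : realType}.
Implicit Types (H : R -> R) (c T : R).

Lemma lt0_left_segment H c : {for c, continuous H} -> H c < 0 -> 0 < c ->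
  exists2 s, 0 < s < c & {in `[s, c], forall d, H d < 0}.
Proof.
move=> cH Hc c_gt0.
have /nbhs_ballP[e /= e_gt0 Hball] : \forall d \near c, H d < 0.
  exact: (cvgr_lt (H c) cH).
have me_gt0 : 0 < minr e c by rewrite lt_min e_gt0 c_gt0.
have half_lt : minr e c / 2 < minr e c by rewrite ltr_pdivrMr // ltr_pMr // ltr1n.
exists (c - minr e c / 2).
  rewrite ltrBlDr ltrDl divr_gt0 // andbT subr_gt0.
  by rewrite (lt_le_trans half_lt) // ge_min lexx orbT.
move=> d; rewrite in_itv /= => /andP[sd dc]; apply: Hball.
rewrite -ball_normE /= ger0_norm ?subr_ge0 //.
apply: (le_lt_trans (_ : _ <= minr e c / 2)); first by rewrite lerBlDr -lerBlDl.
by rewrite (lt_le_trans half_lt) // ge_min lexx.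
Qed.

Lemma comparison_ge0 H T :
  {within [set t | 0 <= t < T], continuous H} ->
  (forall t, 0 < t < T -> derivable H t 1) ->
  (forall t, 0 < t < T -> H t < 0 -> 0 < derive1 H t) ->
  0 <= H 0 -> forall t, 0 <= t < T -> 0 <= H t.
Proof.
move=> cH dH H'_gt0 H0 t /andP[t_ge0 tT]; rewrite leNgt; apply/negP => Ht.
have sub a b : 0 <= a -> b < T -> [set` `[a, b]] `<=` [set t | 0 <= t < T].
  move=> a_ge0 bT s /=; rewrite in_itv /= => /andP[a_s sb].
  by rewrite (le_trans a_ge0 a_s) (le_lt_trans sb bT).
(* a minimum point c of H on [0, t] where H < 0 leads to a contradiction *)
have [c] := EVT_min t_ge0 (continuous_subspaceW (sub _ _ (lexx 0) tT) cH).
rewrite in_itv /= => /andP[c_ge0 ct] cmin.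
have Hc : H c < 0 by rewrite (le_lt_trans (cmin t _)) // in_itv /= t_ge0 lexx.
have c_gt0 : 0 < c.
  by rewrite lt_neqAle c_ge0 andbT; apply: contraTneq Hc => <-; rewrite -leNgt.
have cT : c < T by rewrite (le_lt_trans ct tT).
have cHc : {for c, continuous H}.
  by apply: differentiable_continuous; apply/derivable1_diffP/dH; rewrite c_gt0.
have [s /andP[s_gt0 sc] Hneg] := lt0_left_segment cHc Hc c_gt0.
have inT d : d \in `]s, c[ -> 0 < d < T.
  by rewrite in_itv /= => /andP[sd dc]; rewrite (lt_trans s_gt0) ?(lt_trans dc).
have Hs_lt_Hc : H s < H c.
  apply: (@gtr0_derive1_lt_cc _ H s c); rewrite ?in_itv /= ?lexx ?(ltW sc) //.
  - by move=> d /inT; exact: dH.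
  - move=> d dsc; apply: H'_gt0; first exact: inT.
    by apply: Hneg; move: dsc; rewrite !in_itv /= => /andP[/ltW -> /ltW ->].
  - exact: continuous_subspaceW (sub _ _ (ltW s_gt0) cT) cH.
by move: Hs_lt_Hc; rewrite ltNge cmin // in_itv /= (ltW s_gt0) (le_trans (ltW sc)).
Qed.

End Comparison.

Lemma diff_grad (R : realType) n (h : 'cV[R]_n -> R) x v :
  differentiable h x -> 'd h x v = (grad h x *m v) 0 0.
Proof.
move=> dh.
have -> : v = \sum_i v i 0 *: delta_mx i 0.
  by rewrite {1}(matrix_sum_delta v); apply: eq_bigr => i _; rewrite big_ord1.
rewrite linear_sum mulmx_sumr summxE; apply: eq_bigr => i _.
rewrite linearZ /= -scalemxAr mxE -deriveE // !mxE (bigD1 i) //= big1 ?addr0.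
  by rewrite !mxE !eqxx mulr1.
by move=> j ji; rewrite !mxE (negbTE ji) mulr0.
Qed.

Lemma is_derive_comp_grad (R : realType) n (h : 'cV[R]_n -> R)
    (xs : R -> 'cV[R]_n) t v :
  differentiable h (xs t) -> is_derive t 1 xs v ->
  is_derive t 1 (h \o xs) ((grad h (xs t) *m v) 0 0).
Proof.
move=> dh dxs; have dxs_t : differentiable xs t by apply/derivable1_diffP; case: dxs.
have dhxs : differentiable (h \o xs) t by exact: differentiable_comp.
apply: DeriveDef; first exact/derivable1_diffP.
by rewrite deriveE // diff_comp //= -(@deriveE _ _ _ xs t 1 dxs_t) (@derive_val _ _ _ _ _ _ _ dxs) diff_grad.
Qed.

Lemma weak_duality (R : realType) q r (A : 'M[R]_(r, q)) (b : 'cV[R]_r)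
    (mu : 'cV[R]_r) (th : 'cV[R]_q) :
  cv_le (A *m th) b -> cv_le mu 0 -> sc (b^T *m mu) <= sc ((mu^T *m A) *m th).
Proof.
move=> Ab mu_le0; rewrite /sc -mulmxA !mxE; apply: ler_sum => i _.
rewrite !mxE mulrC; apply: ler_wnM2l.
- by move: (mu_le0 i); rewrite mxE.
- by move: (Ab i); rewrite mxE.
Qed.

Lemma Lie_derivative_closed_loop (R : realType) n p m (h : 'cV[R]_n -> R) f g F G
    (x : 'cV[R]_n) (u : 'cV[R]_m) (theta : 'cV[R]_(p + m)) :
  (grad h x *m (f x + g x *m u + phi F G x u *m theta)) 0 0 =
  Lf h f x + sc (Lg h g x *m u) + sc (Lphi h F G x u *m theta).
Proof. by rewrite !mulmxDr -!mulmxA [in LHS]mxE [in X in X + _ = _]mxE. Qed.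

Lemma qp_feasible_barrier (R : realType) n p m (U : set 'cV[R]_m)
    (A : 'M[R]_((p + m).*2, p + m)) (b : 'cV[R]_((p + m).*2))
    (h : 'cV[R]_n -> R) alpha f g F G x u mu (theta : 'cV[R]_(p + m)) :
  qp_feasible U A b h alpha f g F G x u mu -> cv_le (A *m theta) b ->
  - alpha (h x) <= (grad h x *m (f x + g x *m u + phi F G x u *m theta)) 0 0.
Proof.
move=> [_ [mu_le0 [barrier muA]]] Atheta.
have := weak_duality Atheta mu_le0; rewrite muA Lie_derivative_closed_loop.
by move: barrier; lra.
Qed.

Theorem theorem1 (R : realType) (n p m : nat)
  (U : set 'cV[R]_m)
  (f : 'cV[R]_n -> 'cV[R]_n) (g : 'cV[R]_n -> 'M[R]_(n, m))
  (F : 'cV[R]_n -> 'M[R]_(n, p)) (G : 'cV[R]_n -> 'M[R]_(n, m))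
  (lo hi theta : 'cV[R]_(p + m))
  (A : 'M[R]_((p + m).*2, p + m)) (b : 'cV[R]_((p + m).*2))
  (h : 'cV[R]_n -> R) (alpha : R -> R)
  (kd k : 'cV[R]_n -> 'cV[R]_m) :
  loc_lipschitz f -> loc_lipschitz g ->
  box lo hi theta ->
  (forall th, box lo hi th <-> cv_le (A *m th) b) ->
  C1 h ->
  ext_classK alpha ->
  (forall x, h x >= 0 ->
     (ereal_sup [set ereal_inf [set (Lf h f x + sc (Lg h g x *m u)
                                      + sc (Lphi h F G x u *m th))%:E
                               | th in box lo hi]
               | u in U] >= (- alpha (h x))%:E)%E) ->
  (forall x, h x >= 0 -> exists u, U u /\
     ((Lf h f x + sc (Lg h g x *m u))%:E
        + ereal_inf [set (sc (Lphi h F G x u *m th))%:E | th in box lo hi]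
      >= (- alpha (h x))%:E)%E) ->
  loc_lipschitz kd ->
  loc_lipschitz k ->
  (forall x, exists mu, qp_solution U A b h alpha f g F G kd x (k x) mu) ->
  forward_invariant (fun x => f x + g x *m k x + phi F G x (k x) *m theta)
                    [set x | h x >= 0].
Proof.
move=> _ _ theta_box box_halfspaces [hdiff _] [_ [alpha_incr alpha0]] _ _ _ _ k_qp.
move=> T xs [cxs dxs] hx0 t tT /=.
have dhxs s : 0 < s < T -> is_derive s 1 (h \o xs)
    ((grad h (xs s) *m (f (xs s) + g (xs s) *m k (xs s)
        + phi F G (xs s) (k (xs s)) *m theta)) 0 0).
  by move=> sT; apply: is_derive_comp_grad => //; exact: dxs.
apply: (@comparison_ge0 _ (h \o xs) T) => // [s|s sT|s sT hs_lt0].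
- exact: continuous_comp (cxs s) (differentiable_continuous (hdiff _)).
- by have [] := dhxs s sT.
rewrite derive1E (@derive_val _ _ _ _ _ _ _ (dhxs s sT)).
have [mu [feasible _]] := k_qp (xs s).
have alpha_lt0 : 0 < - alpha (h (xs s)) by rewrite oppr_gt0 -alpha0 alpha_incr.
exact: lt_le_trans alpha_lt0 (qp_feasible_barrier feasible ((box_halfspaces theta).1 theta_box)).
Qed.
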